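(* For every $t>0$ and all $\alpha,\beta\ge0$ with $\alpha+\beta\ge1$ or $\alpha+\beta\le\tfrac12$, $$(t^{1-\alpha-\beta}+1)^2\,(t^{2\alpha}-1)\,(t^{2\beta}-1)\ \ge\ 16\,\alpha\beta\,(t-1)^2.$$ *)

From Stdlib Require Import Reals.

(* Put t = exp (2 y).  Dividing by 16 t, the inequality becomes
     cosh ((1 - a - b) y)^2 sinh (2 a y) sinh (2 b y) >= 4 a b sinh y ^ 2,
   an even function of y, so take y >= 0.  With s = a + b and d = a - b,
   sinh (2 a y) sinh (2 b y) = sinh (s y)^2 - sinh (d y)^2, and since sinh is
   convex on [0, oo) with sinh 0 = 0, sinh (d y)^2 <= (d / s)^2 sinh (s y)^2;
   this leaves (4 a b / s^2) (cosh ((1 - s) y) sinh (s y))^2.  Finally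
   2 cosh ((1 - s) y) sinh (s y) = sinh y + sinh ((2 s - 1) y) >= 2 s sinh y,
   because sinh (m y) >= m sinh y holds for m >= 1 and for -1 <= m <= 0, i.e.
   exactly when s >= 1 or s <= 1/2. *)
From Stdlib Require Import Reals Lra Psatz.
Open Scope R_scope.

Ltac exp_field :=
  unfold sinh, cosh, Rminus; rewrite ?Ropp_plus_distr, ?Ropp_involutive, ?exp_plus, ?exp_Ropp;
  field; repeat split; apply Rgt_not_eq, exp_pos.

Lemma sinh_opp x : sinh (- x) = - sinh x.
Proof. unfold sinh; rewrite Ropp_involutive; field. Qed.

Lemma cosh_opp x : cosh (- x) = cosh x.
Proof. unfold cosh; rewrite Ropp_involutive; field. Qed.

Lemma sinh_ge0 x : 0 <= x -> 0 <= sinh x.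
Proof.
  intros [Hx | <-]; rewrite <- sinh_0 at 1; [left; now apply sinh_lt | lra].
Qed.

Lemma two_sinh_mul_sinh p q : 2 * sinh p * sinh q = cosh (p + q) - cosh (p - q).
Proof. exp_field. Qed.

Lemma two_cosh_mul_sinh u w : 2 * cosh u * sinh w = sinh (w + u) + sinh (w - u).
Proof. exp_field. Qed.

Lemma sinh_add_mul_sinh_sub u w : sinh (w + u) * sinh (w - u) = sinh w ^ 2 - sinh u ^ 2.
Proof. exp_field. Qed.

Lemma cosh_le u w : 0 <= u <= w -> cosh u <= cosh w.
Proof.
  intros Huw.
  pose proof (two_sinh_mul_sinh ((w + u) / 2) ((w - u) / 2)) as E.
  replace ((w + u) / 2 + (w - u) / 2) with w in E by field.
  replace ((w + u) / 2 - (w - u) / 2) with u in E by field.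
  pose proof (sinh_ge0 ((w + u) / 2) ltac:(lra)).
  pose proof (sinh_ge0 ((w - u) / 2) ltac:(lra)).
  nra.
Qed.

(* The difference l sinh x - sinh (l x) vanishes at 0 and has derivative
   l (cosh x - cosh (l x)) >= 0 on [0, oo). *)
Lemma sinh_scale_le l v : 0 <= l <= 1 -> 0 <= v -> sinh (l * v) <= l * sinh v.
Proof.
  intros Hl [Hv | <-]; [| rewrite Rmult_0_r, sinh_0; lra].
  set (f x := l * sinh x - sinh (l * x)).
  assert (Hderiv : forall c, derivable_pt_lim f c (l * cosh c - cosh (l * c) * l)).
  { intros c; apply (derivable_pt_lim_minus (fun x => l * sinh x) (fun x => sinh (l * x))).
    - apply derivable_pt_lim_scal, derivable_pt_lim_sinh.
    - apply (derivable_pt_lim_comp (fun x => l * x) sinh).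
      + pose proof (derivable_pt_lim_scal id l c 1 (derivable_pt_lim_id c)) as H.
        now rewrite Rmult_1_r in H.
      + apply derivable_pt_lim_sinh. }
  destruct (MVT_cor2 f _ 0 v Hv (fun c _ => Hderiv c)) as [c [Hmvt Hc]].
  pose proof (cosh_le (l * c) c ltac:(nra)).
  assert (f 0 = 0) by (unfold f; rewrite Rmult_0_r, sinh_0; ring).
  assert (0 <= (l * cosh c - cosh (l * c) * l) * (v - 0)) by (apply Rmult_le_pos; nra).
  unfold f in *; lra.
Qed.

Lemma sinh_sq_scale_le l v : -1 <= l <= 1 -> 0 <= v -> sinh (l * v) ^ 2 <= l ^ 2 * sinh v ^ 2.
Proof.
  intros Hl Hv.
  assert (Habs : sinh (Rabs l * v) <= Rabs l * sinh v) by (apply sinh_scale_le; auto;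
    split; [apply Rabs_pos | apply Rabs_le; lra]).
  pose proof (sinh_ge0 (Rabs l * v) ltac:(pose proof (Rabs_pos l); nra)).
  assert (E : sinh (l * v) ^ 2 = sinh (Rabs l * v) ^ 2).
  { unfold Rabs; destruct (Rcase_abs l); [| reflexivity].
    replace (- l * v) with (- (l * v)) by ring; rewrite sinh_opp; ring. }
  rewrite E, <- (pow2_abs l), <- Rpow_mult_distr.
  apply pow_incr; lra.
Qed.

Lemma sq_mul_sinh_scale_le d s v : 0 < s -> -s <= d <= s -> 0 <= v ->
  (s * sinh (d * v)) ^ 2 <= (d * sinh (s * v)) ^ 2.
Proof.
  intros Hs Hd Hv.
  assert (Hl : -1 <= d / s <= 1).
  { unfold Rdiv; split; apply (Rmult_le_reg_r s); rewrite ?Rmult_assoc, ?Rinv_l; lra. }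
  pose proof (sinh_sq_scale_le (d / s) (s * v) Hl ltac:(nra)) as H.
  replace (d / s * (s * v)) with (d * v) in H by (field; lra).
  apply (Rmult_le_compat_l (s ^ 2)) in H; [| nra].
  replace (s ^ 2 * ((d / s) ^ 2 * sinh (s * v) ^ 2)) with ((d * sinh (s * v)) ^ 2) in H
    by (field; lra).
  nra.
Qed.

Lemma le_sinh_scale m y : 1 <= m \/ -1 <= m <= 0 -> 0 <= y -> m * sinh y <= sinh (m * y).
Proof.
  intros [Hm | Hm] Hy.
  - pose proof (sinh_scale_le (/ m) (m * y) ltac:(split; [left; apply Rinv_0_lt_compat; lra |
      rewrite <- Rinv_1; apply Rinv_le_contravar; lra]) ltac:(nra)) as H.
    replace (/ m * (m * y)) with y in H by (field; lra).
    apply (Rmult_le_compat_l m) in H; [| lra].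
    now rewrite <- Rmult_assoc, Rinv_r, Rmult_1_l in H by lra.
  - pose proof (sinh_scale_le (- m) y ltac:(lra) Hy).
    replace (m * y) with (- (- m * y)) by ring; rewrite sinh_opp; lra.
Qed.

Lemma le_cosh_mul_sinh s y : 0 <= s -> 1 <= s \/ s <= 1/2 -> 0 <= y ->
  s * sinh y <= cosh ((1 - s) * y) * sinh (s * y).
Proof.
  intros Hs0 Hs Hy.
  pose proof (two_cosh_mul_sinh ((1 - s) * y) (s * y)) as E.
  replace (s * y + (1 - s) * y) with y in E by ring.
  replace (s * y - (1 - s) * y) with ((2 * s - 1) * y) in E by ring.
  pose proof (le_sinh_scale (2 * s - 1) y ltac:(lra) Hy).
  lra.
Qed.

Lemma cosh_sq_sinh_sinh_ge_nonneg a b y : 0 <= a -> 0 <= b -> 1 <= a + b \/ a + b <= 1/2 -> 0 <= y ->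
  4 * a * b * sinh y ^ 2 <= cosh ((1 - a - b) * y) ^ 2 * sinh (2 * a * y) * sinh (2 * b * y).
Proof.
  intros Ha Hb Hs Hy.
  set (s := a + b) in *; set (d := a - b).
  destruct (Req_dec s 0) as [Hs0 | Hs0].
  { assert (a = 0) by (unfold s in *; lra); subst a.
    replace (2 * 0 * y) with 0 by ring; rewrite sinh_0; lra. }
  assert (Hprod : sinh (2 * a * y) * sinh (2 * b * y) = sinh (s * y) ^ 2 - sinh (d * y) ^ 2).
  { rewrite <- sinh_add_mul_sinh_sub; f_equal; f_equal; unfold s, d; ring. }
  assert (Hd : (s * sinh (d * y)) ^ 2 <= (d * sinh (s * y)) ^ 2)
    by (apply sq_mul_sinh_scale_le; unfold s, d in *; lra).
  assert (Hc : (s * sinh y) ^ 2 <= (cosh ((1 - a - b) * y) * sinh (s * y)) ^ 2).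
  { assert (Hs_nonneg : 0 <= s) by (unfold s; lra).
    pose proof (le_cosh_mul_sinh s y Hs_nonneg Hs Hy).
    pose proof (sinh_ge0 y Hy).
    replace (1 - a - b) with (1 - s) by (unfold s; ring).
    apply pow_incr; split; nra. }
  assert (Hab : 4 * a * b = s ^ 2 - d ^ 2) by (unfold s, d; ring).
  rewrite (Rmult_assoc (_ ^ 2)), Hprod.
  apply (Rmult_le_reg_l (s ^ 2)); [nra |].
  set (k := cosh ((1 - a - b) * y)) in *.
  assert (0 <= k ^ 2) by nra.
  assert (k ^ 2 * (s * sinh (d * y)) ^ 2 <= k ^ 2 * (d * sinh (s * y)) ^ 2)
    by (apply Rmult_le_compat_l; lra).
  assert (4 * a * b * (s * sinh y) ^ 2 <= 4 * a * b * (k * sinh (s * y)) ^ 2)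
    by (apply Rmult_le_compat_l; [nra | lra]).
  nra.
Qed.

Lemma cosh_sq_sinh_sinh_ge a b y : 0 <= a -> 0 <= b -> 1 <= a + b \/ a + b <= 1/2 ->
  4 * a * b * sinh y ^ 2 <= cosh ((1 - a - b) * y) ^ 2 * sinh (2 * a * y) * sinh (2 * b * y).
Proof.
  intros Ha Hb Hs.
  destruct (Rle_dec 0 y) as [Hy | Hy]; [now apply cosh_sq_sinh_sinh_ge_nonneg |].
  pose proof (cosh_sq_sinh_sinh_ge_nonneg a b (- y) Ha Hb Hs ltac:(lra)) as H.
  replace ((1 - a - b) * - y) with (- ((1 - a - b) * y)) in H by ring.
  replace (2 * a * - y) with (- (2 * a * y)) in H by ring.
  replace (2 * b * - y) with (- (2 * b * y)) in H by ring.
  rewrite cosh_opp, !sinh_opp in H.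
  lra.
Qed.

Lemma exp_double_sub_one u : exp (2 * u) - 1 = 2 * exp u * sinh u.
Proof. replace (2 * u) with (u + u) by ring; exp_field. Qed.

Lemma exp_double_add_one u : exp (2 * u) + 1 = 2 * exp u * cosh u.
Proof. replace (2 * u) with (u + u) by ring; exp_field. Qed.

Theorem lemma3p3 (t alpha beta : R) (ht : 0 < t) (ha : 0 <= alpha) (hb : 0 <= beta)
  (hab : 1 <= alpha + beta \/ alpha + beta <= 1/2) :
  (Rpower t (1 - alpha - beta) + 1) ^ 2 * (Rpower t (2 * alpha) - 1)
    * (Rpower t (2 * beta) - 1) >= 16 * alpha * beta * (t - 1) ^ 2.
Proof.
  set (y := ln t / 2).
  assert (Hpow : forall c, Rpower t c = exp (2 * (c * y))) by (intros; unfold Rpower, y; f_equal; field).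
  assert (Ht : t = exp (2 * y)) by (unfold y; rewrite <- (exp_ln t ht) at 1; f_equal; field).
  rewrite !Hpow, Ht, !exp_double_sub_one, exp_double_add_one.
  set (p := (1 - alpha - beta) * y).
  assert (Hexp : exp p * exp p * exp (2 * alpha * y) * exp (2 * beta * y) = exp y * exp y)
    by (rewrite <- !exp_plus; f_equal; unfold p; ring).
  pose proof (cosh_sq_sinh_sinh_ge alpha beta y ha hb hab) as H.
  fold p in H.
  match goal with |- ?L >= ?R =>
    replace L with (16 * (exp p * exp p * exp (2 * alpha * y) * exp (2 * beta * y))
                    * (cosh p ^ 2 * sinh (2 * alpha * y) * sinh (2 * beta * y))) by ring;
    replace R with (16 * (exp y * exp y) * (4 * alpha * beta * sinh y ^ 2)) by ring
  end.
  rewrite Hexp.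
  apply Rle_ge, Rmult_le_compat_l; [pose proof (exp_pos y); nra | exact H].
Qed.
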